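(* Let $G$ be a group, $\alpha\colon G^3\to\mathrm{U}(1)$ a normalized 3-cocycle, and $g\in G$ an element of order $n$. Let $\tilde\rho\colon\mathbb{Z}^2\to G$ be the homomorphism with $\tilde\rho(\mathsf e_1)=g$, $\tilde\rho(\mathsf e_2)=1$, and let $\tilde\gamma\colon\mathbb{Z}^2\times\mathbb{Z}^2\to\mathrm{U}(1)$ be a normalized 2-cochain with $d\tilde\gamma=\tilde\rho^*\alpha$ and $\tilde\gamma(\mathsf e_1,\mathsf e_2)=\tilde\gamma(\mathsf e_2,\mathsf e_1)$. For $A=\begin{pmatrix}a&b\\c&d\end{pmatrix}$ in the stabilizer of $\tilde\rho$ in $\mathrm{SL}_2(\mathbb{Z})$ put $$R_{\tilde\rho}(A)=\frac{\tilde\gamma(b\mathsf e_1+d\mathsf e_2,\ a\mathsf e_1+c\mathsf e_2)}{\tilde\gamma(a\mathsf e_1+c\mathsf e_2,\ b\mathsf e_1+d\mathsf e_2)}.$$ Then for $T^n=\begin{pmatrix}1&n\\0&1\end{pmatrix}$, $$R_{\tilde\rho}(T^n)=\prod_{j=0}^{n-1}\alpha(g,g^j,g)^{-1}.$$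
   Context: $\mathsf e_1,\mathsf e_2$ is the standard basis of $\mathbb{Z}^2=\pi_1(\mathbb{T}^2)$; $\mathrm{SL}_2(\mathbb{Z})$ acts on homomorphisms by $(A^*\tilde\rho)(\mathsf e_1)=\tilde\rho(\mathsf e_1)^a\tilde\rho(\mathsf e_2)^c$, $(A^*\tilde\rho)(\mathsf e_2)=\tilde\rho(\mathsf e_1)^b\tilde\rho(\mathsf e_2)^d$, and $T^n$ stabilizes $\tilde\rho$. Group cochain conventions (additive notation in $\mathbb{Z}^2$): $(d\tilde\gamma)(x,y,z)=\tilde\gamma(y,z)\tilde\gamma(x+y,z)^{-1}\tilde\gamma(x,y+z)\tilde\gamma(x,y)^{-1}$ and $\tilde\rho^*\alpha(x,y,z)=\alpha(\tilde\rho x,\tilde\rho y,\tilde\rho z)$; normalized means $\tilde\gamma(0,x)=\tilde\gamma(x,0)=1$. The value $R_{\tilde\rho}(A)$ is the character of the stabilizer describing the mapping-class-group action on the fiber of the Freed–Quinn line over the $G$-bundle with holonomy $\tilde\rho$. *)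

From HB Require Import structures.
From mathcomp Require Import all_boot all_order all_algebra.
From mathcomp Require Import complex reals.
Set Implicit Arguments. Unset Strict Implicit. Unset Printing Implicit Defensive.
Import Order.TTheory GRing.Theory Num.Theory.

Definition is_group (G : Type) (mul : G -> G -> G) (one : G) (inv : G -> G) : Prop :=
  [/\ forall x y z, mul x (mul y z) = mul (mul x y) z,
      forall x, mul one x = x /\ mul x one = x
    & forall x, mul (inv x) x = one /\ mul x (inv x) = one].

Definition gpow (G : Type) (mul : G -> G -> G) (one : G) (g : G) (j : nat) : G :=
  iter j (mul g) one.

Definition has_order (G : Type) (mul : G -> G -> G) (one : G) (g : G) (n : nat) : Prop :=
  (0 < n)%N /\ gpow mul one g n = one /\
  forall m : nat, (0 < m)%N -> (m < n)%N -> gpow mul one g m <> one.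

Definition Z2 := (int * int)%type.
Definition z2add (x y : Z2) : Z2 := (x.1 + y.1, x.2 + y.2)%R.
Definition z2scale (k : int) (x : Z2) : Z2 := (k * x.1, k * x.2)%R.
Definition e1 : Z2 := (1%R, 0%R).
Definition e2 : Z2 := (0%R, 1%R).

Local Open Scope ring_scope.

(* U(1)-valued functions, modelled inside C = R[i] *)
Definition U1_valued3 (R : realType) (G : Type) (f : G -> G -> G -> R[i]) : Prop :=
  forall x y z, `|f x y z| = 1.
Definition U1_valued2 (R : realType) (T : Type) (f : T -> T -> R[i]) : Prop :=
  forall x y, `|f x y| = 1.

Definition normalized_3cocycle (R : realType) (G : Type) (mul : G -> G -> G) (one : G)
  (alpha : G -> G -> G -> R[i]) : Prop :=
  [/\ U1_valued3 alpha,
      forall x y z w,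
        alpha y z w * (alpha (mul x y) z w)^-1 * alpha x (mul y z) w
          * (alpha x y (mul z w))^-1 * alpha x y z = 1
    & forall x y, alpha one x y = 1 /\ alpha x one y = 1 /\ alpha x y one = 1].

Definition is_hom_Z2 (G : Type) (mul : G -> G -> G) (rho : Z2 -> G) : Prop :=
  forall x y, rho (z2add x y) = mul (rho x) (rho y).

Definition normalized_2cochain (R : realType) (gam : Z2 -> Z2 -> R[i]) : Prop :=
  U1_valued2 gam /\ forall x, gam (0, 0) x = 1 /\ gam x (0, 0) = 1.

Definition cobound2 (R : realType) (gam : Z2 -> Z2 -> R[i]) (x y z : Z2) : R[i] :=
  gam y z * (gam (z2add x y) z)^-1 * gam x (z2add y z) * (gam x y)^-1.

Definition pullback3 (R : realType) (G : Type) (rho : Z2 -> G)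
  (alpha : G -> G -> G -> R[i]) (x y z : Z2) : R[i] :=
  alpha (rho x) (rho y) (rho z).

(* R_rho(A) for A = [[a, b], [c, d]] *)
Definition R_rho (R : realType) (gam : Z2 -> Z2 -> R[i]) (a b c d : int) : R[i] :=
  gam (z2add (z2scale b e1) (z2scale d e2)) (z2add (z2scale a e1) (z2scale c e2))
  / gam (z2add (z2scale a e1) (z2scale c e2)) (z2add (z2scale b e1) (z2scale d e2)).

From HB Require Import structures.
From mathcomp Require Import all_boot all_order all_algebra.
From mathcomp Require Import complex reals.
From mathcomp Require Import ring.
Set Implicit Arguments. Unset Strict Implicit. Unset Printing Implicit Defensive.
Import Order.TTheory GRing.Theory Num.Theory.
Local Open Scope ring_scope.

(* Put [r(v) := gam(v, e1) / gam(e1, v)] and [v_k := T^k e2 = k e1 + e2].  Since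
   [v_(k+1) = v_k + e1 = e1 + v_k], the coboundary equation at [(e1, v_k, e1)]
   gives [r(v_(k+1)) = r(v_k) / alpha(g, g^k, g)], while [r(v_0) = r(e2) = 1] by
   the symmetry assumption; and [R_rho(T^n)] is exactly [r(v_n)]. *)

Definition Tpow_e2 (k : nat) : Z2 := (k%:Z, 1).

Lemma z2addC (x y : Z2) : z2add x y = z2add y x.
Proof. by rewrite /z2add addrC [x.2 + _]addrC. Qed.

Lemma z2add_Tpow_e2_e1 (k : nat) : z2add (Tpow_e2 k) e1 = Tpow_e2 k.+1.
Proof. by rewrite /z2add /= addr0 -[X in (_ + X, _)]/(1%:Z) -PoszD addn1. Qed.

Lemma z2add_e1_Tpow_e2 (k : nat) : z2add e1 (Tpow_e2 k) = Tpow_e2 k.+1.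
Proof. by rewrite z2addC z2add_Tpow_e2_e1. Qed.

Lemma U1_valued2_neq0 (R : realType) (T : Type) (f : T -> T -> R[i]) :
  U1_valued2 f -> forall x y, f x y != 0.
Proof. by move=> U x y; rewrite -normr_eq0 U oner_eq0. Qed.

Section CommutatorRatio.

Variables (R : realType) (gam : Z2 -> Z2 -> R[i]).

Definition gam_ratio (x y : Z2) : R[i] := gam y x / gam x y.

Lemma R_rho_Tn (n : nat) : R_rho gam 1 n%:Z 0 1 = gam_ratio e1 (Tpow_e2 n).
Proof.
rewrite /R_rho /gam_ratio /z2add /z2scale /= !(mulr0, mulr1, addr0, add0r).
by rewrite -[(1, 0)]/e1.
Qed.

Hypothesis gam_neq0 : forall x y, gam x y != 0.

Lemma gam_ratio_addr (x y : Z2) :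
  gam_ratio x (z2add y x) = gam_ratio x y / cobound2 gam x y x.
Proof.
rewrite /gam_ratio /cobound2 [z2add x y]z2addC.
have := gam_neq0 x y; have := gam_neq0 y x.
have := gam_neq0 x (z2add y x); have := gam_neq0 (z2add y x) x.
by move=> n1 n2 n3 n4; field; rewrite n1 n2 n3 n4.
Qed.

End CommutatorRatio.

Lemma hom_Tpow_e2 (G : Type) (mul : G -> G -> G) (one : G) (rho : Z2 -> G) (k : nat) :
  is_hom_Z2 mul rho -> rho e2 = one -> rho (Tpow_e2 k) = gpow mul one (rho e1) k.
Proof.
move=> hom rho_e2; elim: k => [|k IHk] /=; first exact: rho_e2.
by rewrite -z2add_e1_Tpow_e2 hom IHk.
Qed.

Lemma gam_ratio_Tpow_e2 (R : realType) (G : Type) (mul : G -> G -> G) (one : G)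
    (alpha : G -> G -> G -> R[i]) (rho : Z2 -> G) (gam : Z2 -> Z2 -> R[i]) (k : nat) :
  is_hom_Z2 mul rho -> rho e2 = one -> (forall x y, gam x y != 0) ->
  (forall x y z, cobound2 gam x y z = pullback3 rho alpha x y z) ->
  gam e1 e2 = gam e2 e1 ->
  gam_ratio gam e1 (Tpow_e2 k)
    = \prod_(j < k) (alpha (rho e1) (gpow mul one (rho e1) j) (rho e1))^-1.
Proof.
move=> hom rho_e2 gam_neq0 dgam gam_sym; elim: k => [|k IHk].
  by rewrite big_ord0 -[Tpow_e2 0]/e2 /gam_ratio gam_sym divff.
rewrite -z2add_Tpow_e2_e1 gam_ratio_addr // IHk dgam /pullback3.
by rewrite (hom_Tpow_e2 _ hom rho_e2) big_ord_recr.
Qed.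

Theorem mainTheorem13 (R : realType) (G : Type) (mul : G -> G -> G) (one : G)
  (inv : G -> G) (alpha : G -> G -> G -> R[i]) (g : G) (n : nat)
  (rho : Z2 -> G) (gam : Z2 -> Z2 -> R[i]) :
  is_group mul one inv ->
  normalized_3cocycle mul one alpha ->
  has_order mul one g n ->
  is_hom_Z2 mul rho -> rho e1 = g -> rho e2 = one ->
  normalized_2cochain gam ->
  (forall x y z, cobound2 gam x y z = pullback3 rho alpha x y z) ->
  gam e1 e2 = gam e2 e1 ->
  R_rho gam 1 n%:Z 0 1 = \prod_(j < n) (alpha g (gpow mul one g j) g)^-1.
Proof.
move=> _ _ _ hom rho_e1 rho_e2 [gam_U1 _] dgam gam_sym.
rewrite R_rho_Tn -rho_e1.
exact: gam_ratio_Tpow_e2 (U1_valued2_neq0 gam_U1) dgam gam_sym.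
Qed.
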